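(* Let $I\ge 2$, let $\mathcal F_I$ be a saturated fraction of the $I\times I$ design $[I]\times[I]$, and let $E_{I+1}\subseteq[I+1]\times[I+1]$ with $\mathcal F_I\cap E_{I+1}=\emptyset$. Set $\mathcal F_{I+1}=\mathcal F_I\cup E_{I+1}$, viewed as a fraction of $[I+1]\times[I+1]$. Then $\mathcal F_{I+1}$ is saturated if and only if $E_{I+1}$ consists of exactly two points, both lying in $\{(i,j)\in[I+1]\times[I+1]: i=I+1 \text{ or } j=I+1\}$, and the margins of $\mathcal F_{I+1}$ satisfy $m_{A,I+1}\ge 1$ and $m_{B,I+1}\ge 1$.
   Context: For a fraction $\mathcal F\subseteq[I]\times[J]$, its margins are $m_{A,i}=\#\{(d_1,d_2)\in\mathcal F: d_1=i\}$ and $m_{B,j}=\#\{(d_1,d_2)\in\mathcal F: d_2=j\}$. For $(i,j)\in[I]\times[J]$ let $r_{(i,j)}\in\mathbb R^{I+J-1}$ be the row vector $(1,a_1,\dots,a_{I-1},b_1,\dots,b_{J-1})$ with $a_s=1$ iff $s=i$ and $b_t=1$ iff $t=j$ (all other entries $0$); $X_{\mathcal F}$ is the matrix with rows $r_{(i,j)}$, $(i,j)\in\mathcal F$. $\mathcal F$ is saturated if $\#\mathcal F=I+J-1$ and $X_{\mathcal F}$ is non-singular. *)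

From HB Require Import structures.
From mathcomp Require Import all_boot all_order all_algebra.
Set Implicit Arguments. Unset Strict Implicit. Unset Printing Implicit Defensive.
Import GRing.Theory Num.Theory.

(* Levels of the factors are 0-based: level k : 'I_I stands for level k+1 of [I].
   So the last level I of [I] is ord_max. *)

Local Open Scope ring_scope.

(* The row vector r_(i,j) in Q^(I+J-1), columns indexed 0..I+J-2:
   column 0          : the constant 1
   column s, 1<=s<=I-1: a_s = 1 iff s = i (1-based), i.e. s = i0.+1
   column I-1+t, 1<=t<=J-1: b_t = 1 iff t = j (1-based), i.e. column = I + j0 *)
Definition rowvec (I J : nat) (p : 'I_I * 'I_J) : 'rV[rat]_(I + J - 1) :=
  \row_(c < I + J - 1)
    (if (c == 0%N :> nat) then 1
     else if (c < I)%N then ((c == (p.1).+1 :> nat)%:R)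
     else ((c == (I + p.2)%N :> nat)%:R)).

Definition XF (I J : nat) (F : {set 'I_I * 'I_J}) : 'M[rat]_(#|F|, I + J - 1) :=
  \matrix_(k < #|F|) rowvec (enum_val k).

Definition saturated (I J : nat) (F : {set 'I_I * 'I_J}) : Prop :=
  exists e : #|F| = (I + J - 1)%N, castmx (e, erefl) (XF F) \in unitmx.

Definition marginA (I J : nat) (F : {set 'I_I * 'I_J}) (i : 'I_I) : nat :=
  #|[set p in F | p.1 == i]|.
Definition marginB (I J : nat) (F : {set 'I_I * 'I_J}) (j : 'I_J) : nat :=
  #|[set p in F | p.2 == j]|.

Definition embed (I J : nat) (F : {set 'I_I * 'I_J}) : {set 'I_I.+1 * 'I_J.+1} :=
  [set (widen_ord (leqnSn I) p.1, widen_ord (leqnSn J) p.2) | p in F].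

From HB Require Import structures.
From mathcomp Require Import all_boot all_order all_algebra zify lra.
Set Implicit Arguments. Unset Strict Implicit. Unset Printing Implicit Defensive.
Import GRing.Theory Num.Theory.
Local Open Scope ring_scope.

(* A column vector x in Q^D is a parameter vector, and
   the row r_p of point p acts on it as the linear functional x |-> r_p x.

   These functionals are exactly the additive functions
   p = (i, j) |-> a_i + b_j (every x gives one, every one comes from some x,
   and x is determined by its values on the whole grid).  Hence a fraction F
   with #|F| = D is saturated iff it is "determining": an additive function
   vanishing on F vanishes everywhere; and a saturated F also interpolates
   any prescribed values on F by an additive function.

   For the extension G = F u E of a saturated F by a new row and column:
   - if G is saturated then #|E| = 2 by counting; a point of E inside the old
     grid would, by interpolating its indicator on G, give an additive
     function vanishing on F but not everywhere; and every margin of a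
     saturated fraction is positive (an indicator of an empty row or column
     would vanish on it).
   - conversely an additive function vanishing on G is, by determinacy of F,
     k + u[i = I+1] on rows and -k + v[j = I+1] on columns; each point of E
     yields one of u = 0, v = 0, u + v = 0, and the margin conditions force
     two distinct ones, so u = v = 0. *)

Section RowFunctionals.
Variables I J : nat.
Local Notation D := (I.+1 + J.+1 - 1)%N.
Implicit Types (x : 'cV[rat]_D) (p : 'I_I.+1 * 'I_J.+1).

(* The k-th coordinate of x, extended by 0 beyond the last column, so that
   the row functionals can be written with plain natural-number indices. *)
Definition coord x (k : nat) : rat := if insub k is Some c then x c 0 else 0.

Lemma coord_ord x (c : 'I_D) : coord x c = x c 0.
Proof. by rewrite /coord valK. Qed.

Lemma coord_out x k : (D <= k)%N -> coord x k = 0.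
Proof. by move=> hk; rewrite /coord insubF // ltnNge hk. Qed.

Lemma sum_delta_coord x k : \sum_(c < D) ((c : nat) == k)%:R * coord x c = coord x k.
Proof.
case: (ltnP k D) => hk.
  rewrite (bigD1 (Ordinal hk)) //= eqxx mul1r big1 ?addr0 // => c.
  by rewrite -val_eqE /= => /negbTE ->; rewrite mul0r.
rewrite coord_out // big1 // => c _.
have /negbTE -> : (c : nat) != k by rewrite neq_ltn (leq_trans (ltn_ord c)).
by rewrite mul0r.
Qed.

Definition rowval x p : rat := (rowvec p *m x) 0 0.

(* Entries of r_p as a sum of deltas: the constant, the indicator a_i (absent
   for the last level i = I), and the indicator b_j, which for the last level
   j = J falls beyond the last column. *)
Lemma rowvec_entry p (c : 'I_D) : rowvec p 0 c =
  ((c : nat) == 0%N)%:R + (p.1 < I)%:R * ((c : nat) == p.1.+1)%:R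
  + ((c : nat) == (I.+1 + p.2)%N)%:R.
Proof.
rewrite mxE; case: p => i j /=; have := ltn_ord i.
case: (eqVneq (c : nat) 0%N) => [c0|cn0]; case: (ltnP c I.+1) => hc;
case: (eqVneq (c : nat) i.+1) => e1; case: (eqVneq (c : nat) (I.+1 + j)%N) => e2;
case: (ltnP i I) => hiI; rewrite /= ?mulr0 ?mul0r ?mulr1 ?addr0 ?add0r //; lia.
Qed.

Lemma rowvalE x p : rowval x p =
  coord x 0 + (p.1 < I)%:R * coord x p.1.+1 + coord x (I.+1 + p.2)%N.
Proof.
rewrite /rowval mxE; under eq_bigr => c _ do rewrite rowvec_entry -coord_ord !mulrDl -mulrA.
by rewrite !big_split /= -mulr_sumr !sum_delta_coord.
Qed.

Lemma rowval_additive x : exists (a : 'I_I.+1 -> rat) (b : 'I_J.+1 -> rat),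
  forall p, rowval x p = a p.1 + b p.2.
Proof.
exists (fun i : 'I_I.+1 => coord x 0 + (i < I)%:R * coord x i.+1).
by exists (fun j : 'I_J.+1 => coord x (I.+1 + j)%N) => p; rewrite rowvalE.
Qed.

Lemma additive_rowval (a : 'I_I.+1 -> rat) (b : 'I_J.+1 -> rat) :
  exists x, forall p, rowval x p = a p.1 + b p.2.
Proof.
pose entry k := if k == 0%N then a ord_max + b ord_max
  else if (k < I.+1)%N then a (inord k.-1) - a ord_max
  else b (inord (k - I.+1)) - b ord_max.
have coordE k : (k < D)%N -> coord (\col_(c < D) entry c) k = entry k.
  by move=> hk; rewrite -[k]/(val (Ordinal hk)) coord_ord mxE.
exists (\col_(c < D) entry c) => [[i j]]; rewrite rowvalE /= coordE; last by lia.
have -> : (i < I)%:R * coord (\col_(c < D) entry c) i.+1 = a i - a ord_max.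
  case: (ltnP i I) => hi.
    by rewrite mul1r coordE /entry ?ltnS ?hi ?inord_val //; lia.
  have -> : i = ord_max by apply/val_inj => /=; have := ltn_ord i; lia.
  by rewrite mul0r subrr.
case: (ltnP j J) => hj.
  rewrite coordE; last by lia.
  by rewrite /entry /= ifF ?addKn ?inord_val; [lra | lia].
have -> : j = ord_max by apply/val_inj => /=; have := ltn_ord j; lia.
by rewrite coord_out /entry /=; [lra | lia].
Qed.

(* The functionals of all grid points separate parameter vectors: the last
   cell gives the constant, the last column the a's, the last row the b's. *)
Lemma rowval_eq0 x : (forall p, rowval x p = 0) -> x = 0.
Proof.
move=> h; have c0 : coord x 0 = 0.
  move: (h (ord_max, ord_max)); rewrite rowvalE /= ltnn mul0r.
  by rewrite (coord_out _ (k := (I.+1 + J)%N)) ?addr0 //; lia.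
apply/matrixP => c k; rewrite (ord1 k) !mxE -coord_ord.
case: (eqVneq (c : nat) 0%N) => [-> //|cn0].
case: (ltnP c I.+1) => hcI.
  have hi : (c.-1 < I.+1)%N by lia.
  move: (h (Ordinal hi, ord_max)); rewrite rowvalE /= c0 add0r.
  rewrite (coord_out _ (k := (I.+1 + J)%N)); last by lia.
  by rewrite addr0 (_ : (c.-1 < I)%N) ?mul1r ?prednK //; lia.
have hj : (c - I.+1 < J.+1)%N by have := ltn_ord c; lia.
by move: (h (ord_max, Ordinal hj)); rewrite rowvalE /= c0 ltnn mul0r !add0r subnKC.
Qed.
End RowFunctionals.

Section Saturation.
Variables I J : nat.
Local Notation D := (I.+1 + J.+1 - 1)%N.
Implicit Type F : {set 'I_I.+1 * 'I_J.+1}.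

Definition determining F : Prop :=
  forall (a : 'I_I.+1 -> rat) (b : 'I_J.+1 -> rat),
  {in F, forall p, a p.1 + b p.2 = 0} -> forall i j, a i + b j = 0.

Lemma XF_mulmxP F (e : #|F| = D) x (t : 'I_I.+1 * 'I_J.+1 -> rat) :
  castmx (e, erefl) (XF F) *m x = \col_k t (enum_val (cast_ord (esym e) k)) <->
  {in F, forall p, rowval x p = t p}.
Proof.
have entryE k : (castmx (e, erefl) (XF F) *m x) k 0 =
    rowval x (enum_val (cast_ord (esym e) k)).
  by rewrite /rowval !mxE; apply: eq_bigr => c _; rewrite castmxE !mxE cast_ord_id.
split=> [hM p hp | hF].
  have := congr1 (fun M : 'cV[rat]_D => M (cast_ord e (enum_rank_in hp p)) 0) hM.
  by rewrite /= entryE mxE cast_ordK enum_rankK_in.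
by apply/matrixP => k l; rewrite (ord1 l) entryE mxE hF //; apply: enum_valP.
Qed.

Lemma rowval0 (p : 'I_I.+1 * 'I_J.+1) : rowval 0 p = 0.
Proof. by rewrite /rowval mulmx0 mxE. Qed.

Lemma saturated_determining F : saturated F -> determining F.
Proof.
case=> e unitM a b hab i j; have [x hx] := additive_rowval a b.
have Mx0 : castmx (e, erefl) (XF F) *m x = 0.
  have /XF_mulmxP -> : {in F, forall p, rowval x p = 0} by move=> p hp; rewrite hx hab.
  by apply/matrixP => k l; rewrite !mxE.
have x0 : x = 0 by rewrite -(mulKmx unitM x) Mx0 mulmx0.
by rewrite -(hx (i, j)) x0 rowval0.
Qed.

Lemma saturated_interpolation F : saturated F ->
  forall t : 'I_I.+1 * 'I_J.+1 -> rat,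
  exists (a : 'I_I.+1 -> rat) (b : 'I_J.+1 -> rat), {in F, forall p, a p.1 + b p.2 = t p}.
Proof.
case=> e unitM t; set M := castmx (e, erefl) (XF F).
pose x := invmx M *m \col_k t (enum_val (cast_ord (esym e) k)).
have /XF_mulmxP hx : M *m x = \col_k t (enum_val (cast_ord (esym e) k)).
  by rewrite mulKVmx.
have [a [b hab]] := rowval_additive x.
by exists a, b => p hp; rewrite -hab hx.
Qed.

(* Conversely, a determining fraction of the right size is saturated: a left
   kernel vector v of X_F would give an additive function vanishing on F. *)
Lemma determining_saturated F : #|F| = D -> determining F -> saturated F.
Proof.
move=> e detF; exists e; rewrite unitmxE unitfE -det_tr.
apply/negP => /det0P [v v_neq0 hv].
have hF : {in F, forall p, rowval v^T p = 0}.
  apply/(XF_mulmxP e v^T (fun=> 0)); rewrite -[castmx _ _]trmxK -trmx_mul hv.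
  by apply/matrixP => k l; rewrite !mxE.
have [a [b hab]] := rowval_additive v^T.
have vT0 : v^T = 0.
  by apply: rowval_eq0 => p; rewrite hab; apply: detF => q hq; rewrite -hab hF.
by move: v_neq0; rewrite -[v]trmxK vT0 trmx0 eqxx.
Qed.

(* Every row of the design meets a saturated fraction: otherwise the
   indicator of that row would vanish on F. *)
Lemma saturated_marginA F i : saturated F -> (0 < marginA F i)%N.
Proof.
move=> satF; rewrite card_gt0; apply/negP => /eqP row_empty.
have vanish : {in F, forall p, (p.1 == i)%:R + 0 = 0 :> rat}.
  move=> p hp; rewrite addr0; case: eqP => // p1i.
  by have := in_set0 p; rewrite -row_empty inE hp p1i eqxx.
have /eqP := saturated_determining satF
  (a := fun k => (k == i)%:R) (b := fun=> 0) vanish i ord0.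
by rewrite eqxx addr0 oner_eq0.
Qed.

Lemma saturated_marginB F j : saturated F -> (0 < marginB F j)%N.
Proof.
move=> satF; rewrite card_gt0; apply/negP => /eqP column_empty.
have vanish : {in F, forall p, 0 + (p.2 == j)%:R = 0 :> rat}.
  move=> p hp; rewrite add0r; case: eqP => // p2j.
  by have := in_set0 p; rewrite -column_empty inE hp p2j eqxx.
have /eqP := saturated_determining satF
  (a := fun=> 0) (b := fun k => (k == j)%:R) vanish ord0 j.
by rewrite eqxx add0r oner_eq0.
Qed.
End Saturation.

Section Embedding.
Variable n : nat.
Local Notation widen := (widen_ord (leqnSn n.+1)).

Lemma widen_neq_max (i : 'I_n.+1) : widen i != ord_max.
Proof. by rewrite -val_eqE /= neq_ltn ltn_ord. Qed.

Lemma ord_split (k : 'I_n.+2) : k = ord_max \/ exists i, k = widen i.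
Proof.
case: (ltnP k n.+1) => hk; last by left; apply/val_inj => /=; have := ltn_ord k; lia.
by right; exists (Ordinal hk); apply/val_inj.
Qed.
End Embedding.

Section Extension.
Variables I J : nat.
Variable F : {set 'I_I.+1 * 'I_J.+1}.
Variable E : {set 'I_I.+2 * 'I_J.+2}.
Local Notation widen := (widen_ord (leqnSn _)).
Local Notation G := (embed F :|: E).

Lemma mem_embed p : p \in F -> (widen p.1, widen p.2) \in embed F.
Proof. by move=> hp; apply/imsetP; exists p. Qed.

Lemma embed_off_border q : q \in embed F -> q.1 != ord_max /\ q.2 != ord_max.
Proof. by case/imsetP => p _ ->; rewrite !widen_neq_max. Qed.

Lemma card_extension : embed F :&: E = set0 -> #|G| = (#|F| + #|E|)%N.
Proof.
move=> disj; rewrite cardsU disj cards0 subn0 card_imset // => p q [].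
by case: p q => [i j] [i' j'] /= /val_inj -> /val_inj ->.
Qed.

Lemma marginA_extension : marginA G ord_max = marginA E ord_max.
Proof.
apply: eq_card => q; rewrite !inE.
by case qF: (q \in embed F); rewrite //= andbC; case: (embed_off_border qF) => /negbTE ->.
Qed.

Lemma marginB_extension : marginB G ord_max = marginB E ord_max.
Proof.
apply: eq_card => q; rewrite !inE.
by case qF: (q \in embed F); rewrite //= andbC; case: (embed_off_border qF) => _ /negbTE ->.
Qed.

(* A saturated extension of a saturated F adds no point inside the old grid:
   interpolating the indicator of such a point q on G gives an additive
   function vanishing on F but not at q. *)
Lemma saturated_extension_interior : saturated F -> saturated G ->
  forall q, q \in G -> q.1 != ord_max -> q.2 != ord_max -> q \in embed F.
Proof.
move=> satF satG q qG /eqP q1 /eqP q2.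
case: (ord_split q.1) => // -[i qi]; case: (ord_split q.2) => // -[j qj].
apply: contraT => q_notin.
have [a [b hab]] := saturated_interpolation satG (fun r => (r == q)%:R).
have vanish : {in F, forall p, a (widen p.1) + b (widen p.2) = 0}.
  move=> p hp; have hp' := mem_embed hp.
  rewrite (hab _ (subsetP (subsetUl _ E) _ hp')).
  by case: eqP => // pq; rewrite -pq hp' in q_notin.
have /eqP := saturated_determining satF
  (a := fun i => a (widen i)) (b := fun j => b (widen j)) vanish i j.
by rewrite -qi -qj hab // eqxx oner_eq0.
Qed.

Lemma extension_border : saturated F -> embed F :&: E = set0 -> saturated G ->
  forall p, p \in E -> p.1 = ord_max \/ p.2 = ord_max.
Proof.
move=> satF disj satG p pE.
case: (eqVneq p.1 ord_max) => [|p1]; first by left.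
case: (eqVneq p.2 ord_max) => [|p2]; first by right.
have pF : p \in embed F by apply: saturated_extension_interior; rewrite // inE pE orbT.
by have := in_set0 p; rewrite -disj inE pF pE.
Qed.

(* An additive function vanishing on the embedded determining F is, for some
   k, equal to k on old rows and -k on old columns; so its value at q only
   involves u = a_max - k and v = b_max + k. *)
Lemma additive_on_extension (a : 'I_I.+2 -> rat) (b : 'I_J.+2 -> rat) :
  determining F -> {in embed F, forall q, a q.1 + b q.2 = 0} ->
  exists k, forall q, a q.1 + b q.2 =
    (q.1 == ord_max)%:R * (a ord_max - k) + (q.2 == ord_max)%:R * (b ord_max + k).
Proof.
move=> detF vanish.
have inner := detF (fun i => a (widen i)) (fun j => b (widen j))
  (fun p hp => vanish _ (mem_embed hp)).
have [k ha] : exists k, forall i, a (widen i) = k.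
  by exists (a (widen ord0)) => i; have := inner i ord0; have := inner ord0 ord0; lra.
have hb j : b (widen j) = - k by have := inner ord0 j; rewrite ha; lra.
exists k => q.
case: (ord_split q.1) => [->|[i ->]]; case: (ord_split q.2) => [->|[j ->]];
  rewrite ?eqxx ?(negbTE (widen_neq_max _)) ?ha ?hb /=; lra.
Qed.

(* Two distinct border points give two of the three equations u = 0, v = 0,
   u + v = 0 (the a's and b's record membership in the new row and column);
   if they cover the new row and the new column, then u = v = 0. *)
Lemma border_forms (u v : rat) (a1 b1 a2 b2 : bool) :
  a1 || b1 -> a2 || b2 -> a1 || a2 -> b1 || b2 -> ~~ [&& a1, b1, a2 & b2] ->
  a1%:R * u + b1%:R * v = 0 -> a2%:R * u + b2%:R * v = 0 -> u = 0 /\ v = 0.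
Proof. by case: a1 b1 a2 b2 => [] [] [] [] //= _ _ _ _ _ *; split; lra. Qed.

Lemma extension_determining : determining F -> #|E| = 2%N ->
  (forall p, p \in E -> p.1 = ord_max \/ p.2 = ord_max) ->
  (0 < marginA G ord_max)%N -> (0 < marginB G ord_max)%N -> determining G.
Proof.
move=> detF /eqP/cards2P [p [q [pq Epq]]] border rowA colB a b hab.
have [k hk] := additive_on_extension detF (fun r hr => hab r (subsetP (subsetUl _ _) r hr)).
have formE r : r \in E ->
    (r.1 == ord_max)%:R * (a ord_max - k) + (r.2 == ord_max)%:R * (b ord_max + k) = 0.
  by move=> hr; rewrite -hk hab // inE hr orbT.
have onBorder r : r \in E -> (r.1 == ord_max) || (r.2 == ord_max).
  by move=> /border [] ->; rewrite eqxx ?orbT.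
have pE : p \in E by rewrite Epq !inE eqxx.
have qE : q \in E by rewrite Epq !inE eqxx orbT.
have rowpq : (p.1 == ord_max) || (q.1 == ord_max).
  move: rowA; rewrite marginA_extension Epq card_gt0 => /set0Pn [r].
  by rewrite !inE => /andP [/orP [] /eqP -> ->]; rewrite ?orbT.
have colpq : (p.2 == ord_max) || (q.2 == ord_max).
  move: colB; rewrite marginB_extension Epq card_gt0 => /set0Pn [r].
  by rewrite !inE => /andP [/orP [] /eqP -> ->]; rewrite ?orbT.
have distinct : ~~ [&& p.1 == ord_max, p.2 == ord_max, q.1 == ord_max & q.2 == ord_max].
  apply: contra pq => /and4P [/eqP p1 /eqP p2 /eqP q1 /eqP q2].
  by rewrite [p]surjective_pairing [q]surjective_pairing p1 p2 q1 q2.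
have [u0 v0] := border_forms (onBorder _ pE) (onBorder _ qE) rowpq colpq distinct
  (formE _ pE) (formE _ qE).
by move=> i j; rewrite (hk (i, j)) u0 v0 !mulr0 addr0.
Qed.
End Extension.

Theorem lemma4p4 (I : nat) (hI : (2 <= I)%N)
  (F : {set 'I_I * 'I_I}) (E : {set 'I_I.+1 * 'I_I.+1}) :
  saturated F ->
  embed F :&: E = set0 ->
  saturated (embed F :|: E) <->
  [/\ #|E| = 2%N,
      (forall p, p \in E -> p.1 = ord_max \/ p.2 = ord_max),
      (1 <= marginA (embed F :|: E) ord_max)%N &
      (1 <= marginB (embed F :|: E) ord_max)%N].
Proof.
case: I hI F E => [|n] // _ F E satF disj.
have cardF : #|F| = (n.+1 + n.+1 - 1)%N by case: satF.
have cardG := card_extension disj.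
split=> [satG | [cardE border rowA colB]].
- split.
  + have : #|embed F :|: E| = (n.+2 + n.+2 - 1)%N by case: satG.
    by rewrite cardG cardF; lia.
  + exact: extension_border satF disj satG.
  + exact: saturated_marginA ord_max satG.
  + exact: saturated_marginB ord_max satG.
- apply: determining_saturated; first by rewrite cardG cardF cardE; lia.
  exact: extension_determining (saturated_determining satF) cardE border rowA colB.
Qed.
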